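(* Let $m,n,p\ge 1$, let $B\in\mathbb{R}^{m\times n}$ (standing for the current warped image $D\circ\tau$), let $J:\mathbb{R}^p\to\mathbb{R}^{m\times n}$ be a linear map with adjoint $J^*$ such that $J^*J$ is invertible, and let $\lambda>0$, $\sigma>0$. Define, for $X,E\in\mathbb{R}^{m\times n}$, $\Delta\tau\in\mathbb{R}^p$, $Y\in\mathbb{R}^{m\times n}$, $$\mathcal{L}_\sigma(X,E,\Delta\tau;Y)=\|X\|_*+\lambda\|E\|_1+\langle Y,B+J\Delta\tau-X-E\rangle+\tfrac{\sigma}{2}\|B+J\Delta\tau-X-E\|_F^2 .$$ Fix $X^{k+1},E^k,Y^k\in\mathbb{R}^{m\times n}$ and $\Delta\tau^k\in\mathbb{R}^p$, and define successively $$\Delta\tau^{k+1/2}=\operatorname{argmin}_{\Delta\tau}\mathcal{L}_\sigma(X^{k+1},E^k,\Delta\tau;Y^k),\quad E^{k+1}=\operatorname{argmin}_{E}\mathcal{L}_\sigma(X^{k+1},E,\Delta\tau^{k+1/2};Y^k),$$ $$\Delta\tau^{k+1}=\operatorname{argmin}_{\Delta\tau}\mathcal{L}_\sigma(X^{k+1},E^{k+1},\Delta\tau;Y^k).$$ Let $\mathcal{T}$ be the self-adjoint positive semidefinite linear operator on $\mathbb{R}^{m\times n}\times\mathbb{R}^p$ given by $\mathcal{T}(E,\Delta\tau)=\big(J(J^*J)^{-1}J^*E,\,0\big)$, and $\|w\|_{\mathcal{T}}^2=\langle w,\mathcal{T}w\rangle$. Then $$(E^{k+1},\Delta\tau^{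k+1})=\operatorname{argmin}_{E,\Delta\tau}\Big\{\mathcal{L}_\sigma(X^{k+1},E,\Delta\tau;Y^k)+\tfrac{\sigma}{2}\big\|(E,\Delta\tau)-(E^k,\Delta\tau^k)\big\|_{\mathcal{T}}^2\Big\}.$$
   Context: $\|X\|_*$ is the nuclear norm (sum of singular values), $\|E\|_1$ the sum of absolute values of entries, $\|\cdot\|_F$ the Frobenius norm, and $\langle\cdot,\cdot\rangle$ the trace inner product. All argmins above have unique minimizers. *)

From HB Require Import structures.
From mathcomp Require Import all_boot all_order all_algebra.
From mathcomp Require Import boolp classical_sets reals.
Set Implicit Arguments. Unset Strict Implicit. Unset Printing Implicit Defensive.
Import Order.TTheory GRing.Theory Num.Theory.
Local Open Scope ring_scope.

Section Defs.
Variable R : realType.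

(* trace inner product <A,B> = tr(A^T B) = sum_ij A_ij B_ij *)
Definition mdot (m n : nat) (A B : 'M[R]_(m, n)) : R :=
  \sum_(i < m) \sum_(j < n) A i j * B i j.

Definition frob2 (m n : nat) (A : 'M[R]_(m, n)) : R := mdot A A.

Definition l1norm (m n : nat) (A : 'M[R]_(m, n)) : R :=
  \sum_(i < m) \sum_(j < n) `|A i j|.

Definition psd (n : nat) (S : 'M[R]_n) : Prop :=
  S^T = S /\ forall v : 'cV[R]_n, 0 <= (v^T *m S *m v) 0 0.

(* the (unique) PSD square root of X^T X *)
Definition absmx (m n : nat) (X : 'M[R]_(m, n)) : 'M[R]_n :=
  xget 0 [set S : 'M[R]_n | psd S /\ S *m S = X^T *m X].

(* nuclear norm = sum of singular values = tr (sqrt (X^T X)) *)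
Definition nucnorm (m n : nat) (X : 'M[R]_(m, n)) : R := \tr (absmx X).

Definition augL (m n p : nat) (B : 'M[R]_(m, n))
  (J : 'cV[R]_p -> 'M[R]_(m, n)) (lam sigma : R)
  (X E : 'M[R]_(m, n)) (dtau : 'cV[R]_p) (Y : 'M[R]_(m, n)) : R :=
  let C := B + J dtau - X - E in
  nucnorm X + lam * l1norm E + mdot Y C + sigma / 2 * frob2 C.

Definition is_min (T : Type) (f : T -> R) (x : T) : Prop :=
  forall y, f x <= f y.

Definition is_argmin (T : Type) (f : T -> R) (x : T) : Prop :=
  is_min f x /\ forall y, f y <= f x -> y = x.

End Defs.

From HB Require Import structures.
From mathcomp Require Import all_boot all_order all_algebra.
From mathcomp Require Import boolp classical_sets reals.
From mathcomp Require Import ring.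
Set Implicit Arguments. Unset Strict Implicit. Unset Printing Implicit Defensive.
Import Order.TTheory GRing.Theory Num.Theory.
Local Open Scope ring_scope.

(* For fixed E the Δτ-subproblem is least squares on the range of J: its
   minimizer is τ*(E) = (J^*J)^{-1} J^*(E - u), with u = Y/σ + B - X, and
   L(E, Δτ) = L(E, τ*(E)) + σ/2 ‖J (τ*(E) - Δτ)‖_F^2.  As τ*(E) - τ*(E^k) =
   (J^*J)^{-1} J^*(E - E^k), this gives L(E, Δτ^{k+1/2}) = L(E, τ*(E)) +
   σ/2 ‖E - E^k‖_T^2: the E-step minimizes the T-proximal objective with Δτ
   minimized out, and the last Δτ-step minimizes it in Δτ for E = E^{k+1}. *)

Section PartialMinimization.
Variables (R : realType) (A B : Type).

Lemma is_argmin_eq (T : Type) (f : T -> R) x y : is_argmin f x -> is_min f y -> y = x.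
Proof. by move=> [_ uniq_x] min_y; apply: uniq_x; apply: min_y. Qed.

Lemma is_argmin_partial (L : A -> B -> R) (g : A -> R) (h : A -> B) a1 b1 :
    (forall a, is_min (L a) (h a)) ->
    is_argmin (fun a => L a (h a) + g a) a1 ->
    is_argmin (L a1) b1 ->
  is_argmin (fun w : A * B => L w.1 w.2 + g w.1) (a1, b1).
Proof.
move=> min_h [min_a1 uniq_a1] [min_b1 uniq_b1].
have le_partial a b : L a (h a) + g a <= L a b + g a.
  by rewrite lerD2r; apply: min_h.
have le_a1 : L a1 b1 + g a1 <= L a1 (h a1) + g a1.
  by rewrite lerD2r; apply: min_b1.
split.
  move=> [a b]; exact: le_trans le_a1 (le_trans (min_a1 a) (le_partial a b)).
move=> [a b] /= le_ab.
have ea : a = a1.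
  apply: uniq_a1; apply: le_trans (le_partial a b) _.
  exact: le_trans le_ab le_a1.
by move: le_ab; rewrite ea lerD2r => /uniq_b1 ->.
Qed.

End PartialMinimization.

Section TraceInnerProduct.
Variables (R : realType) (m n : nat).
Implicit Types (A C D Y : 'M[R]_(m, n)) (s : R).

Lemma mdotC A C : mdot A C = mdot C A.
Proof. by apply: eq_bigr => i _; apply: eq_bigr => j _; rewrite mulrC. Qed.

Lemma mdotDr A C D : mdot A (C + D) = mdot A C + mdot A D.
Proof.
rewrite /mdot -big_split; apply: eq_bigr => i _; rewrite -big_split.
by apply: eq_bigr => j _; rewrite mxE mulrDr.
Qed.

Lemma mdotNr A C : mdot A (- C) = - mdot A C.
Proof.
rewrite /mdot -sumrN; apply: eq_bigr => i _; rewrite -sumrN.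
by apply: eq_bigr => j _; rewrite mxE mulrN.
Qed.

Lemma mdotZr s A C : mdot A (s *: C) = s * mdot A C.
Proof.
rewrite /mdot mulr_sumr; apply: eq_bigr => i _; rewrite mulr_sumr.
by apply: eq_bigr => j _; rewrite mxE mulrCA.
Qed.

Lemma mdot0r A : mdot A 0 = 0.
Proof. by rewrite /mdot big1 // => i _; rewrite big1 // => j _; rewrite mxE mulr0. Qed.

Lemma mdotDl A C D : mdot (C + D) A = mdot C A + mdot D A.
Proof. by rewrite mdotC mdotDr !(mdotC A). Qed.

Lemma mdotNl A C : mdot (- C) A = - mdot C A.
Proof. by rewrite mdotC mdotNr mdotC. Qed.

Lemma mdotZl s A C : mdot (s *: C) A = s * mdot C A.
Proof. by rewrite mdotC mdotZr mdotC. Qed.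

Lemma frob2_ge0 A : 0 <= frob2 A.
Proof. by apply: sumr_ge0 => i _; apply: sumr_ge0 => j _; rewrite -expr2 sqr_ge0. Qed.

Definition quad Y s A := mdot Y A + s / 2 * frob2 A.

Lemma quadB_orth Y s C D : mdot (Y + s *: C) D = 0 ->
  quad Y s (C - D) = quad Y s C + s / 2 * frob2 D.
Proof.
rewrite mdotDl mdotZl /quad /frob2 !(mdotDr, mdotDl, mdotNr, mdotNl) (mdotC D C).
move: (mdot Y C) (mdot Y D) (mdot C C) (mdot C D) (mdot D D) => a b c d e orth.
by rewrite -[RHS]subr0 -orth; field.
Qed.

End TraceInnerProduct.

Section RangeProjection.
Variables (R : realType) (m n p : nat).
Variables (J : {linear 'cV[R]_p -> 'M[R]_(m, n)}).
Variables (Jadj : {linear 'M[R]_(m, n) -> 'cV[R]_p}).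
Variable Ginv : 'cV[R]_p -> 'cV[R]_p.
Hypothesis hadj : forall t M, mdot (J t) M = mdot t (Jadj M).
Hypothesis hGinvl : forall t, Ginv (Jadj (J t)) = t.
Hypothesis hGinvr : forall t, Jadj (J (Ginv t)) = t.

Definition projJ M := J (Ginv (Jadj M)).

Lemma GinvB t t' : Ginv (t - t') = Ginv t - Ginv t'.
Proof. by rewrite -{1}(hGinvr t) -{1}(hGinvr t') -!raddfB hGinvl. Qed.

Lemma frob2_projJ M : frob2 (projJ M) = mdot M (projJ M).
Proof. by rewrite /frob2 /projJ [RHS]mdotC !hadj hGinvr. Qed.

Section DeltaTauStep.
Variables (B X Y : 'M[R]_(m, n)) (lam sigma : R).
Hypothesis hsigma : 0 < sigma.

Local Notation augLt E t := (augL B J lam sigma X E t Y).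

Definition tau_opt E := Ginv (Jadj (E - (sigma^-1 *: Y + (B - X)))).

Lemma augLE E t :
  augLt E t = nucnorm X + lam * l1norm E + quad Y sigma (B + J t - X - E).
Proof. by rewrite /augL /quad addrA. Qed.

Lemma Jadj_grad_tau_opt E : Jadj (Y + sigma *: (B + J (tau_opt E) - X - E)) = 0.
Proof.
set u := sigma^-1 *: Y + (B - X).
have -> : Y + sigma *: (B + J (tau_opt E) - X - E) = sigma *: (J (tau_opt E) - (E - u)).
  by apply/matrixP => i j; rewrite !mxE; field; rewrite gt_eqF.
by rewrite linearZ /= raddfB /= hGinvr subrr scaler0.
Qed.

Lemma augL_tau_opt_expand E t :
  augLt E t = augLt E (tau_opt E) + sigma / 2 * frob2 (J (tau_opt E - t)).
Proof.
rewrite !augLE -[in RHS]addrA -quadB_orth; last first.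
  by rewrite mdotC hadj Jadj_grad_tau_opt mdot0r.
congr (_ + quad _ _ _); rewrite raddfB /=.
by apply/matrixP => i j; rewrite !mxE; ring.
Qed.

Lemma tau_opt_min E : is_min (fun t => augLt E t) (tau_opt E).
Proof.
move=> t; rewrite [leRHS]augL_tau_opt_expand lerDl.
by apply: mulr_ge0; [rewrite divr_ge0 // ltW | exact: frob2_ge0].
Qed.

Lemma augL_tau_opt_shift E E' :
  augLt E (tau_opt E')
  = augLt E (tau_opt E) + sigma / 2 * mdot (E - E') (projJ (E - E')).
Proof.
rewrite augL_tau_opt_expand -frob2_projJ /tau_opt -GinvB -raddfB.
by rewrite (addrC E') addrKA.
Qed.

End DeltaTauStep.

End RangeProjection.

Theorem lemma1 (R : realType) (m n p : nat)
  (hm : (0 < m)%N) (hn : (0 < n)%N) (hp : (0 < p)%N)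
  (B : 'M[R]_(m, n))
  (J : {linear 'cV[R]_p -> 'M[R]_(m, n)})
  (Jadj : {linear 'M[R]_(m, n) -> 'cV[R]_p})
  (hadj : forall (t : 'cV[R]_p) (M : 'M[R]_(m, n)), mdot (J t) M = mdot t (Jadj M))
  (Ginv : 'cV[R]_p -> 'cV[R]_p)
  (hGinvl : forall t, Ginv (Jadj (J t)) = t)
  (hGinvr : forall t, Jadj (J (Ginv t)) = t)
  (lam sigma : R) (hlam : 0 < lam) (hsigma : 0 < sigma)
  (X1 Ek Yk : 'M[R]_(m, n)) (tauk : 'cV[R]_p)
  (tauh : 'cV[R]_p) (E1 : 'M[R]_(m, n)) (tau1 : 'cV[R]_p)
  (htauh : is_argmin (fun t => augL B J lam sigma X1 Ek t Yk) tauh)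
  (hE1 : is_argmin (fun E => augL B J lam sigma X1 E tauh Yk) E1)
  (htau1 : is_argmin (fun t => augL B J lam sigma X1 E1 t Yk) tau1) :
  let Tnorm2 (E : 'M[R]_(m, n)) (t : 'cV[R]_p) :=
    (* <(E,t), T(E,t)> with T(E,t) = (J (J^*J)^{-1} J^* E, 0) *)
    mdot E (J (Ginv (Jadj E))) + mdot t 0 in
  is_argmin (fun w : 'M[R]_(m, n) * 'cV[R]_p =>
      augL B J lam sigma X1 w.1 w.2 Yk
      + sigma / 2 * Tnorm2 (w.1 - Ek) (w.2 - tauk))
    (E1, tau1).
Proof.
move=> Tnorm2.
pose L E t := augL B J lam sigma X1 E t Yk.
pose tau := tau_opt Jadj Ginv B X1 Yk sigma.
pose prox E := sigma / 2 * mdot (E - Ek) (projJ J Jadj Ginv (E - Ek)).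
have tau_min E : is_min (L E) (tau E) := tau_opt_min hadj hGinvr B X1 Yk lam hsigma E.
have tauhE : tau Ek = tauh := is_argmin_eq htauh (tau_min Ek).
have -> : (fun w => L w.1 w.2 + sigma / 2 * Tnorm2 (w.1 - Ek) (w.2 - tauk))
          = (fun w => L w.1 w.2 + prox w.1).
  by apply: funext => w; rewrite /Tnorm2 mdot0r addr0.
apply: is_argmin_partial => //.
have <- : (fun E => L E tauh) = (fun E => L E (tau E) + prox E).
  by apply: funext => E; rewrite -tauhE; exact: augL_tau_opt_shift.
exact: hE1.
Qed.
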